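(* Let $FAF=\langle\mathcal A,\rho\rangle$ be a fuzzy argumentation framework and $E\subseteq\mathcal A$. For every $C\subseteq\mathcal A$: $E\in\mathcal{CE}(FAF,C)$ if and only if for every $S\in SCCS_{FAF}$, $$E\cap S\in\mathcal{CE}\big(FAF\downarrow_{R_{FAF}(S,E)},\,D_{FAF}(S,E)\cap C\big).$$
   Context: Fuzzy sets: a fuzzy set on a crisp set $X$ is a map $S:X\to[0,1]$; $S\subseteq S'$ means $S(x)\le S'(x)$ for all $x$; $\cap,\cup$ are pointwise $\min,\max$; $\mathrm{Supp}(S)=\{x:S(x)>0\}$. A fuzzy point $(x,a)$, $a\in(0,1]$, has value $a$ at $x$ and $0$ elsewhere; $(x,a)\in S$ means $a\le S(x)$. $a*b=\min\{a,b\}$. A fuzzy argumentation framework (FAF) is $\langle\mathcal A,\rho\rangle$ with $\mathrm{Args}$ a crisp set, $\mathcal A$ a fuzzy set on $\mathrm{Args}$, $\rho:\mathrm{Args}\times\mathrm{Args}\to[0,1]$, $\rho_{AB}=\rho(A,B)$; $A$ attacks $B$ iff $\rho_{AB}>0$. Fuzzy arguments are fuzzy points $(A,a)\in\mathcal A$. An attack of $(A,a)$ on $(B,b)$ is tolerable if $\min\{a,\rho_{AB}\}+b\le1$, sufficient otherwise. $(A,a)$ weakens $(B,b)$ to $(B,b')$, $b'=\min\{1-\min\{a,\rho_{AB}\},b\}$. $T\subseteq\mathcal A$ weakening defends $(C,c)$ (i.e. $(C,c)$ is acceptable w.r.t. $T$) if for every fuzzy argument $(B,b)$ sufficiently attacking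 $(C,c)$ there is $(A',a')\in T$ weakening $(B,b)$ to some $(B,b')$ which tolerably attacks $(C,c)$. $T$ is conflict-free if no $(A,a),(B,b)\in T$ with $(A,a)$ sufficiently attacking $(B,b)$; admissible if conflict-free and it weakening defends every element of $T$. For $C\subseteq\mathcal A$: $\mathcal{AE}(FAF,C)$ is the set of admissible $E$ with $E\subseteq C$; $\mathcal{CE}(FAF,C)$ (complete extensions in $C$) is the set of $E\in\mathcal{AE}(FAF,C)$ such that every fuzzy argument $(A,a)\in C$ weakening defended by $E$ satisfies $(A,a)\in E$. Path-equivalence on $\mathrm{Args}$: $A\sim B$ iff $A=B$ or there are chains of attacks from $A$ to $B$ and from $B$ to $A$. $SCC_{FAF}(A)$ is the fuzzy set with value $\mathcal A(B)$ at each $B\sim A$, $0$ elsewhere; $SCCS_{FAF}$ is the set of these. $outparents_{FAF}(S)$ is the fuzzy set of $(B,\mathcal A(B))$ with $B\notin\mathrm{Supp}(S)$ attacking some argument of $\mathrm{Supp}(S)$. For $T\subseteq\mathcal A$, $FAF\downarrow_T=\langle T,\rho|_{\mathrm{Supp}(T)\times\mathrm{Supp}(T)}\rangle$, and notions in $FAF\downarrow_T$ refer to its own fuzzy arguments and attacks. For $E\subseteq\mathcal A$, $S\in SCCS_{FAF}$: $L_{FAF}(S,E)(A)=\max_B\big((E\cap outparents_{FAF}(S))(B)*\rho_{BA}\big)$ for $A\in\mathrm{Supp}(S)$, $0$ elsewhere; $R_{FAF}(S,E)(A)=\min\{\mathcal A(A),1-L_{FAF}(S,E)(A)\}$ for $A\in\mathrm{Supp}(S)$,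 $0$ elsewhere; $D_{FAF}(S,E)$ is the union of fuzzy points $(A,a)\in R_{FAF}(S,E)$ such that for every $(B,b)\in outparents_{FAF}(S)$ sufficiently attacking $(A,a)$ there is $(C,c)\in E$ weakening $(B,b)$ to some $(B,b')$ which tolerably attacks $(A,a)$. *)

From HB Require Import structures.
From mathcomp Require Import all_boot all_order all_algebra.
From mathcomp Require Import boolp classical_sets reals.
From Stdlib Require Import Relations.

Set Implicit Arguments.
Unset Strict Implicit.
Unset Printing Implicit Defensive.
Import Order.TTheory GRing.Theory Num.Theory.
Local Open Scope ring_scope.
Local Open Scope classical_set_scope.

Section FAF.
Context {R : realType} {Args : finType}.

Definition fuzzy := Args -> R.

Definition fsubset (S S' : fuzzy) : Prop := forall x, S x <= S' x.
Definition fcap (S S' : fuzzy) : fuzzy := fun x => Num.min (S x) (S' x).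
Definition supp (S : fuzzy) (x : Args) : Prop := 0 < S x.

(* the fuzzy point (x,a), a in (0,1], belongs to S *)
Definition fpt_in (S : fuzzy) (x : Args) (a : R) : Prop :=
  0 < a /\ a <= 1 /\ a <= S x.

Definition sufficient (rho : Args -> Args -> R) (A : Args) (a : R) (B : Args) (b : R) : Prop :=
  0 < rho A B /\ 1 < Num.min a (rho A B) + b.
Definition tolerable (rho : Args -> Args -> R) (A : Args) (a : R) (B : Args) (b : R) : Prop :=
  0 < rho A B /\ Num.min a (rho A B) + b <= 1.
Definition weaken (rho : Args -> Args -> R) (A : Args) (a : R) (B : Args) (b : R) : R :=
  Num.min (1 - Num.min a (rho A B)) b.

Definition wdefends (Fa : fuzzy) (rho : Args -> Args -> R) (T : fuzzy) (C : Args) (c : R) : Prop :=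
  forall B b, fpt_in Fa B b -> sufficient rho B b C c ->
    exists A' a', fpt_in T A' a' /\ tolerable rho B (weaken rho A' a' B b) C c.

Definition conflict_free (rho : Args -> Args -> R) (T : fuzzy) : Prop :=
  forall A a B b, fpt_in T A a -> fpt_in T B b -> ~ sufficient rho A a B b.

Definition admissible (Fa : fuzzy) (rho : Args -> Args -> R) (T : fuzzy) : Prop :=
  conflict_free rho T /\ forall C c, fpt_in T C c -> wdefends Fa rho T C c.

Definition AE (Fa : fuzzy) (rho : Args -> Args -> R) (C E : fuzzy) : Prop :=
  admissible Fa rho E /\ fsubset E C.

Definition CE (Fa : fuzzy) (rho : Args -> Args -> R) (C E : fuzzy) : Prop :=
  AE Fa rho C E /\
  forall A a, fpt_in Fa A a -> fpt_in C A a -> wdefends Fa rho E A a -> fpt_in E A a.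

(* restriction FAF|_T = <T, rho restricted to Supp T x Supp T> *)
Definition restr (T : fuzzy) (rho : Args -> Args -> R) : Args -> Args -> R :=
  fun x y => if (0 < T x) && (0 < T y) then rho x y else 0.

Definition reach (rho : Args -> Args -> R) : relation Args :=
  clos_trans Args (fun x y => 0 < rho x y).
Definition pequiv (rho : Args -> Args -> R) (x y : Args) : Prop :=
  x = y \/ (reach rho x y /\ reach rho y x).

Definition SCC (Fa : fuzzy) (rho : Args -> Args -> R) (X : Args) : fuzzy :=
  fun B => if `[< pequiv rho B X >] then Fa B else 0.

Definition outparents (Fa : fuzzy) (rho : Args -> Args -> R) (S : fuzzy) : fuzzy :=
  fun B => if `[< ~ supp S B /\ exists X, supp S X /\ 0 < rho B X >] then Fa B else 0.

Definition Lfun (Fa : fuzzy) (rho : Args -> Args -> R) (S E : fuzzy) : fuzzy :=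
  fun A => if 0 < S A then
             \big[Num.max/0]_(B : Args) Num.min (fcap E (outparents Fa rho S) B) (rho B A)
           else 0.

Definition Rfun (Fa : fuzzy) (rho : Args -> Args -> R) (S E : fuzzy) : fuzzy :=
  fun A => if 0 < S A then Num.min (Fa A) (1 - Lfun Fa rho S E A) else 0.

Definition Dpt (Fa : fuzzy) (rho : Args -> Args -> R) (S E : fuzzy) (A : Args) (a : R) : Prop :=
  fpt_in (Rfun Fa rho S E) A a /\
  forall B b, fpt_in (outparents Fa rho S) B b -> sufficient rho B b A a ->
    exists C c, fpt_in E C c /\ tolerable rho B (weaken rho C c B b) A a.

(* D_FAF(S,E): union of those fuzzy points (pointwise supremum, 0 if none) *)
Definition Dfun (Fa : fuzzy) (rho : Args -> Args -> R) (S E : fuzzy) : fuzzy :=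
  fun A => sup [set a : R | a = 0 \/ Dpt Fa rho S E A a].

End FAF.

From HB Require Import structures.
From mathcomp Require Import all_boot all_order all_algebra.
From mathcomp Require Import boolp classical_sets reals.
From mathcomp Require Import lra.
Import Order.TTheory GRing.Theory Num.Theory.
Local Open Scope ring_scope.

(* Whether (A, a) is defended only involves the attackers of A, which lie
   either in the part S containing A or among the outparents of S.  The members
   of E outside S attack an argument of S with strength at most L(S,E), so on S
   a strength up to R(S,E) = min(Fa, 1 - L(S,E)) is safe from them, and D(S,E)
   collects the strengths whose attackers from outside S are neutralised by E.
   The key observation is that a weakening which neutralises a sufficient
   attack is itself a sufficient attack on the attacker.  Hence weakeners from
   outside S are useless against attackers inside S of strength at most
   R(S,E), defence in the restriction to R(S,E) coincides with global defence
   against the attackers inside S, and complete extensions decompose. *)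

Ltac min_lra :=
  repeat match goal with |- context [Num.min ?x ?y] => case: (leP x y) end;
  intros; lra.

Notation neutralises rho C c B b A a := (tolerable rho B (weaken rho C c B b) A a).

Section FuzzySets.
Context {R : realType} {Args : finType}.
Implicit Types S T : @fuzzy R Args.

Lemma fpt_inW [S T x a] : fsubset S T -> fpt_in S x a -> fpt_in T x a.
Proof.
by move=> ST [a_gt0 [a_le1 aS]]; split=> //; split=> //; exact: le_trans aS (ST x).
Qed.

Lemma fsubset_capl S T : fsubset (fcap S T) S.
Proof. by move=> x; rewrite /fcap ge_min lexx. Qed.

End FuzzySets.

Section Attacks.
Context {R : realType} {Args : finType} {rho : Args -> Args -> R}.
Implicit Types (A B C : Args) (a b c : R).

Lemma sufficientW [A a B b b'] :
  b <= b' -> sufficient rho A a B b -> sufficient rho A a B b'.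
Proof. by move=> le_bb' [rho_gt0 strong]; split=> //; lra. Qed.

Lemma sufficient_of_neutralises [A a B b C c] : b <= 1 ->
  sufficient rho B b A a -> neutralises rho C c B b A a -> sufficient rho C c B b.
Proof.
rewrite /sufficient /tolerable /weaken => b_le1 [_ strong] [_ weak].
have lt_b : 1 - Num.min c (rho C B) < b by move: strong weak; min_lra.
by split; move: lt_b; min_lra.
Qed.

Lemma neutralisesW [A a B b0] b [C c] :
  sufficient rho B b0 A a -> neutralises rho C c B b0 A a ->
  neutralises rho C c B b A a.
Proof.
rewrite /sufficient /tolerable /weaken => [[_ strong] [rho_gt0 weak]].
by split=> //; move: strong weak; min_lra.
Qed.

Lemma le_weaken C c c' B b : c <= c' -> weaken rho C c' B b <= weaken rho C c B b.
Proof.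
by move=> le_cc'; apply: le_min2 => //; rewrite lerD2l lerN2; apply: le_min2.
Qed.

End Attacks.

Section Restriction.
Context {R : realType} {Args : finType} {rho : Args -> Args -> R} {Q : Args -> R}.

Lemma restrE x y : 0 < Q x -> 0 < Q y -> restr Q rho x y = rho x y.
Proof. by move=> Qx Qy; rewrite /restr Qx Qy. Qed.

Lemma sufficient_restr A a B b :
  sufficient (restr Q rho) A a B b <-> [/\ 0 < Q A, 0 < Q B & sufficient rho A a B b].
Proof.
rewrite /sufficient /restr; case: ifP => [/andP[-> ->]|Q_le0]; first by split=> [|[]].
by split=> [[]|[QA QB]]; [rewrite ltxx | rewrite QA QB in Q_le0].
Qed.

Lemma neutralises_restrE A a B b C c : 0 < Q C -> 0 < Q B -> 0 < Q A ->
  neutralises (restr Q rho) C c B b A a <-> neutralises rho C c B b A a.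
Proof. by move=> QC QB QA; rewrite /tolerable /weaken !restrE. Qed.

Lemma neutralises_restr A a B b C c : b <= 1 -> 0 < Q B -> 0 < Q A ->
  sufficient rho B b A a ->
  neutralises (restr Q rho) C c B b A a -> neutralises rho C c B b A a.
Proof.
move=> b_le1 QB QA B_attacks neutral.
have /sufficient_restr[QC _ _] : sufficient (restr Q rho) C c B b.
  by apply: sufficient_of_neutralises b_le1 _ neutral; apply/sufficient_restr.
by move/neutralises_restrE: neutral; apply.
Qed.

End Restriction.

Section Decomposition.
Context {R : realType} {Args : finType}.
Context {Fa : Args -> R} {rho : Args -> Args -> R} {E : Args -> R}.
Hypothesis Fa01 : forall x, 0 <= Fa x <= 1.
Hypothesis rho01 : forall x y, 0 <= rho x y <= 1.
Hypothesis E_ge0 : forall x, 0 <= E x.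
Hypothesis E_le_Fa : fsubset E Fa.

Let Fa_ge0 x : 0 <= Fa x. Proof. by case/andP: (Fa01 x). Qed.
Let Fa_le1 x : Fa x <= 1. Proof. by case/andP: (Fa01 x). Qed.
Let rho_ge0 x y : 0 <= rho x y. Proof. by case/andP: (rho01 x y). Qed.
Let rho_le1 x y : rho x y <= 1. Proof. by case/andP: (rho01 x y). Qed.
Let E_le1 x : E x <= 1. Proof. exact: le_trans (E_le_Fa x) (Fa_le1 x). Qed.

Local Notation CE_in S C :=
  (CE (Rfun Fa rho S E) (restr (Rfun Fa rho S E) rho)
      (fcap (Dfun Fa rho S E) C) (fcap E S)).

Section Part.
Context {S : @fuzzy R Args}.
Hypothesis S_supp : forall B, 0 < S B -> S B = Fa B.

Local Notation O_S := (outparents Fa rho S).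
Local Notation L_S := (Lfun Fa rho S E).
Local Notation R_S := (Rfun Fa rho S E).
Local Notation D_S := (Dfun Fa rho S E).
Local Notation E_S := (fcap E S).

Lemma outparents_ge0 B : 0 <= O_S B.
Proof. by rewrite /outparents; case: asboolP. Qed.

Lemma outparents_le B : O_S B <= Fa B.
Proof. by rewrite /outparents; case: asboolP. Qed.

Lemma outparentsE [B A] : ~ supp S B -> 0 < S A -> 0 < rho B A -> O_S B = Fa B.
Proof. by move=> Bout SA BA; rewrite /outparents asboolT //; split=> //; exists A. Qed.

Lemma Lfun_le1 A : L_S A <= 1.
Proof.
rewrite /Lfun; case: ifP => _; last exact: ler01.
by apply: bigmax_le => [|B _]; rewrite ?ler01 // ge_min rho_le1 orbT.
Qed.

Lemma le_Lfun A B : 0 < S A -> Num.min (Num.min (E B) (O_S B)) (rho B A) <= L_S A.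
Proof. by move=> SA; rewrite /Lfun SA; exact: le_bigmax. Qed.

Lemma Lfun_witness [A] : 0 < L_S A ->
  exists B, [/\ L_S A <= E B, L_S A <= O_S B & L_S A <= rho B A].
Proof.
rewrite /Lfun; case: ifP => _; last by rewrite ltxx.
have F_ge0 B : 0 <= Num.min (fcap E O_S B) (rho B A).
  by rewrite !le_min E_ge0 outparents_ge0 rho_ge0.
have [B _ ->] := eq_bigmax A predT _ isT (fun B _ => F_ge0 B).
by move=> _; exists B; split; rewrite /fcap; min_lra.
Qed.

Lemma Rfun_gt0 [A] : 0 < R_S A -> 0 < S A.
Proof. by rewrite /Rfun; case: ifP => // _; rewrite ltxx. Qed.

Lemma Rfun_eq A : 0 < S A -> R_S A = Num.min (Fa A) (1 - L_S A).
Proof. by rewrite /Rfun => ->. Qed.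

Lemma Rfun_ge0 A : 0 <= R_S A.
Proof.
rewrite /Rfun; case: ifP => // _.
by rewrite le_min Fa_ge0 subr_ge0 Lfun_le1.
Qed.

Lemma Rfun_le_Fa A : R_S A <= Fa A.
Proof. by rewrite /Rfun; case: ifP => _; rewrite ?ge_min ?lexx. Qed.

Lemma Rfun_le1 A : R_S A <= 1.
Proof. exact: le_trans (Rfun_le_Fa A) (Fa_le1 A). Qed.

Lemma fcap_Fa [B] : S B = Fa B -> E_S B = E B.
Proof. by rewrite /fcap => ->; exact: min_l. Qed.

Lemma outparent_not_sufficient [C c B b] : c <= E C -> ~ supp S C -> 0 < S B ->
  b <= R_S B -> ~ sufficient rho C c B b.
Proof.
move=> cE Cout SB; rewrite Rfun_eq // le_min => /andP[_ bL] [rho_gt0 strong].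
have := le_Lfun B C SB; rewrite (outparentsE Cout SB rho_gt0).
by have := E_le_Fa C; move: strong; min_lra.
Qed.

Lemma E_le_Rfun [A] : conflict_free rho E -> 0 < S A -> E A <= R_S A.
Proof.
move=> cfE SA; rewrite Rfun_eq // le_min E_le_Fa /=.
rewrite leNgt; apply/negP => strong.
have L_le1 := Lfun_le1 A.
have L_gt0 : 0 < L_S A by have := E_le1 A; lra.
have [B [LE _ Lrho]] := Lfun_witness L_gt0.
apply: (cfE B (L_S A) A (E A)).
- by split=> //; split.
- by split; [lra | split].
- by split; [lra | rewrite (min_l Lrho); lra].
Qed.

Lemma defended_le_Rfun [A a] : conflict_free rho E -> fpt_in Fa A a -> 0 < S A ->
  wdefends Fa rho E A a -> a <= R_S A.
Proof.
move=> cfE [a_gt0 [a_le1 aFa]] SA defA; rewrite Rfun_eq // le_min aFa /=.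
rewrite leNgt; apply/negP => strong.
have L_gt0 : 0 < L_S A by lra.
have [B [LE LO Lrho]] := Lfun_witness L_gt0.
have B_attacks : sufficient rho B (L_S A) A a.
  by split; [lra | rewrite (min_l Lrho); lra].
have BFa : fpt_in Fa B (L_S A).
  by split=> //; split; [exact: Lfun_le1 | exact: le_trans LO (outparents_le B)].
have [C [c [Cc neutral]]] := defA _ _ BFa B_attacks.
apply: (cfE C c B (E B)) => //; first by split; [lra | split].
exact: sufficientW LE (sufficient_of_neutralises (Lfun_le1 A) B_attacks neutral).
Qed.

Lemma has_sup_Dpt A : has_sup [set a : R | a = 0 \/ Dpt Fa rho S E A a].
Proof.
split; first by exists 0; left.
by exists (R_S A) => y [->|[[_ [_ yR]] _]] //; exact: Rfun_ge0.
Qed.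

Lemma Dfun_ge0 A : 0 <= D_S A.
Proof. by rewrite /Dfun; apply: (sup_upper_bound (has_sup_Dpt A)); left. Qed.

Lemma Dpt_le_Dfun [A a] : Dpt Fa rho S E A a -> a <= D_S A.
Proof.
by move=> Aa; rewrite /Dfun; apply: (sup_upper_bound (has_sup_Dpt A)); right.
Qed.

Lemma Dfun_le_Rfun A : D_S A <= R_S A.
Proof.
apply: ge_sup; first by exists 0; left.
by move=> y [->|[[_ [_ yR]] _]] //; exact: Rfun_ge0.
Qed.

(* The supremum defining D_S A is attained: if g C0 is the least strength to
   which a member of E weakens the attack of an outparent (B, b), every D-point
   lies below 1 - g C0, hence so does D_S A, and (C0, E C0) neutralises the
   attack of (B, b) on (A, a). *)
Lemma Dpt_of_le_Dfun [A a] : 0 < a -> a <= D_S A -> Dpt Fa rho S E A a.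
Proof.
move=> a_gt0 aD; have aR := le_trans aD (Dfun_le_Rfun A).
split; first by split=> //; split=> //; exact: le_trans aR (Rfun_le1 A).
move=> B b BO B_attacks; have [b_gt0 [b_le1 _]] := BO.
pose g C := Num.min (weaken rho C (E C) B b) (rho B A).
have [C0 _ g_min] := @arg_minP _ _ Args B predT g isT.
have g_le_b : g C0 <= Num.min b (rho B A).
  by apply: le_min2 => //; rewrite ge_min lexx orbT.
have D_le : D_S A <= 1 - g C0.
  apply: ge_sup; first by exists 0; left.
  move=> y [->|[_ Dy]]; first by have := rho_le1 B A; rewrite /g; min_lra.
  have [y_attacked | y_safe] := pselect (sufficient rho B b A y).
    have [C [c [[_ [_ cE]] [_ neutral]]]] := Dy B b BO y_attacked.
    have gC : g C <= Num.min (weaken rho C c B b) (rho B A).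
      by apply: le_min2 => //; exact: le_weaken.
    have := g_min C isT; lra.
  have : Num.min b (rho B A) + y <= 1.
    by rewrite leNgt; apply/negP => strong; apply: y_safe; split=> //; case: B_attacks.
  lra.
have [_ strong] := B_attacks.
have EC0_gt0 : 0 < E C0.
  rewrite lt_def E_ge0 andbT; apply/eqP => EC0.
  move: g_le_b D_le; rewrite /g /weaken EC0 (min_l (rho_ge0 C0 B)) subr0 (min_r b_le1).
  lra.
exists C0, (E C0); split; first by split=> //; split.
by split; [exact: B_attacks.1 | rewrite -/(g C0); lra].
Qed.

Lemma outside_attack_neutralised [A a B b] : 0 < a -> a <= D_S A -> fpt_in Fa B b ->
  ~ supp S B -> sufficient rho B b A a ->
  exists C c, fpt_in E C c /\ neutralises rho C c B b A a.
Proof.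
move=> a_gt0 aD [b_gt0 [b_le1 bFa]] Bout B_attacks.
have [[_ [_ aR]] Dpt_A] := Dpt_of_le_Dfun a_gt0 aD.
have SA : 0 < S A by apply: Rfun_gt0; lra.
apply: (Dpt_A B b _ B_attacks); split=> //; split=> //.
by rewrite (outparentsE Bout SA B_attacks.1).
Qed.

Lemma inside_attack_neutralised [A a B b] : fpt_in R_S A a ->
  wdefends R_S (restr R_S rho) E_S A a -> fpt_in Fa B b -> 0 < S B ->
  sufficient rho B b A a ->
  exists C c, fpt_in E C c /\ neutralises rho C c B b A a.
Proof.
move=> [a_gt0 [a_le1 aR]] defA [b_gt0 [b_le1 bFa]] SB B_attacks.
have local b' : 0 < b' -> b' <= R_S B -> sufficient rho B b' A a ->
    exists C c, fpt_in E C c /\ neutralises rho C c B b' A a.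
  move=> b'_gt0 b'R B'_attacks.
  have RB : 0 < R_S B by lra.
  have RA : 0 < R_S A by lra.
  have b'_le1 : b' <= 1 := le_trans b'R (Rfun_le1 B).
  have B'_local : fpt_in R_S B b' by split=> //; split.
  have B'_attacks_locally : sufficient (restr R_S rho) B b' A a.
    exact/sufficient_restr.
  have [C [c [Cc neutral]]] := defA B b' B'_local B'_attacks_locally.
  exists C, c; split; first exact: fpt_inW (@fsubset_capl _ _ E S) Cc.
  exact: neutralises_restr b'_le1 RB RA B'_attacks neutral.
have [bR | Rb] := leP b (R_S B); first exact: local.
(* Since b > R_S B, an outparent of S in E attacks B with strength L_S B > 0,
   and weakening by it caps the attack of B at strength R_S B. *)
have L_gt0 : 0 < L_S B by move: Rb; rewrite Rfun_eq //; min_lra.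
have [B' [LE _ Lrho]] := Lfun_witness L_gt0.
have weakened_le : weaken rho B' (E B') B b <= R_S B.
  by rewrite Rfun_eq // /weaken; move: LE Lrho; min_lra.
have [weak | strong] := leP (Num.min (R_S B) (rho B A) + a) 1.
  exists B', (E B'); split; first by split; [lra | split].
  split; first exact: B_attacks.1.
  by apply: le_trans weak; rewrite lerD2r; apply: le_min2.
have RB_attacks : sufficient rho B (R_S B) A a by split; [exact: B_attacks.1 |].
have [|C [c [Cc neutral]]] := local (R_S B) _ (lexx _) RB_attacks.
  by move: strong; min_lra.
by exists C, c; split; last exact: neutralisesW RB_attacks neutral.
Qed.

Lemma Dpt_of_defended [A a] : fpt_in R_S A a -> wdefends Fa rho E A a ->
  Dpt Fa rho S E A a.
Proof.
move=> RAa defA; split=> // B b [b_gt0 [b_le1 bO]]; apply: defA.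
by split=> //; split=> //; exact: le_trans bO (outparents_le B).
Qed.

Lemma wdefends_of_local [A a] : fpt_in R_S A a -> a <= D_S A ->
  wdefends R_S (restr R_S rho) E_S A a -> wdefends Fa rho E A a.
Proof.
move=> RAa aD defA B b BFa B_attacks.
have [SB | Bout] := pselect (supp S B).
  exact: inside_attack_neutralised RAa defA BFa SB B_attacks.
exact: outside_attack_neutralised RAa.1 aD BFa Bout B_attacks.
Qed.

Lemma fcap_supp B : 0 < S B -> E_S B = E B.
Proof. by move/S_supp; exact: fcap_Fa. Qed.

Lemma fpt_in_fcap [B b] : 0 < S B -> fpt_in E B b -> fpt_in E_S B b.
Proof. by move=> SB [b_gt0 [b_le1 bE]]; split=> //; split=> //; rewrite fcap_supp. Qed.

Lemma wdefends_restr [A a] : conflict_free rho E -> 0 < a -> a <= R_S A ->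
  wdefends Fa rho E A a -> wdefends R_S (restr R_S rho) E_S A a.
Proof.
move=> cfE a_gt0 aR defA B b [b_gt0 [b_le1 bR]] /sufficient_restr[RB RA B_attacks].
have SB := Rfun_gt0 RB.
have BFa : fpt_in Fa B b by split=> //; split=> //; exact: le_trans bR (Rfun_le_Fa B).
have [C [c [[c_gt0 [c_le1 cE]] neutral]]] := defA B b BFa B_attacks.
have [SC | Cout] := pselect (supp S C); last first.
  by case: (outparent_not_sufficient cE Cout SB bR);
     exact: sufficient_of_neutralises b_le1 B_attacks neutral.
have RC : 0 < R_S C := lt_le_trans c_gt0 (le_trans cE (E_le_Rfun cfE SC)).
exists C, c; split; first exact: fpt_in_fcap.
exact/neutralises_restrE.
Qed.

Lemma admissible_le_Dfun : admissible Fa rho E -> fsubset E_S D_S.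
Proof.
move=> [cfE defE] A; have [SA | S_le0] := ltP 0 (S A); last first.
  by apply: le_trans (Dfun_ge0 A); rewrite /fcap ge_min S_le0 orbT.
rewrite fcap_supp //; have [EA_gt0 | E_le0] := ltP 0 (E A); last first.
  exact: le_trans E_le0 (Dfun_ge0 A).
have EA : fpt_in E A (E A) by split=> //; split.
apply: Dpt_le_Dfun; apply: Dpt_of_defended (defE A (E A) EA).
by split=> //; split; [exact: E_le1 | exact: E_le_Rfun].
Qed.

Lemma CE_part C : CE Fa rho C E -> CE_in S C.
Proof.
move=> [[admE E_le_C] completeE]; have [cfE defE] := admE.
have E_S_le_E := @fsubset_capl _ _ E S.
split; [split; [split|] |].
- move=> A a B b /(fpt_inW E_S_le_E) Aa /(fpt_inW E_S_le_E) Bb.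
  by move/sufficient_restr => [_ _]; exact: cfE Aa Bb.
- move=> A a Aa; have [a_gt0 [_ aE_S]] := Aa.
  have SA : 0 < S A by move: aE_S; rewrite /fcap; have := E_ge0 A; min_lra.
  have aE : a <= E A by rewrite -fcap_supp.
  apply: (wdefends_restr cfE a_gt0 _ (defE A a (fpt_inW E_S_le_E Aa))).
  exact: le_trans aE (E_le_Rfun cfE SA).
- move=> A; rewrite [X in _ <= X]/fcap le_min admissible_le_Dfun //=.
  exact: le_trans (E_S_le_E A) (E_le_C A).
- move=> A a RAa [a_gt0 [a_le1 aDC]] defA.
  have /andP[aD aC] : (a <= D_S A) && (a <= C A) by rewrite -le_min.
  have SA : 0 < S A by apply: Rfun_gt0; case: RAa => ? [_ ?]; lra.
  have RFa : fsubset R_S Fa := Rfun_le_Fa.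
  have [_ [_ aE]] := completeE A a (fpt_inW RFa RAa) (conj a_gt0 (conj a_le1 aC))
    (wdefends_of_local RAa aD defA).
  exact: fpt_in_fcap.
Qed.

End Part.

Section Parts.
Variable Sf : Args -> @fuzzy R Args.
Hypothesis Sf_supp : forall X B, 0 < Sf X B -> Sf X B = Fa B.
Hypothesis Sf_self : forall X, Sf X X = Fa X.
Variable C : @fuzzy R Args.
Hypothesis localCE : forall X, CE_in (Sf X) C.

Lemma E_le_Dfun_parts [X A] : Sf X A = Fa A ->
  E A <= Dfun Fa rho (Sf X) E A /\ E A <= C A.
Proof.
move=> SXA; have [[_ sub] _] := localCE X.
by apply/andP; rewrite -le_min -(fcap_Fa SXA); exact: sub.
Qed.

Lemma E_le_Rfun_parts [X A] : Sf X A = Fa A -> E A <= Rfun Fa rho (Sf X) E A.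
Proof. by move/E_le_Dfun_parts => [ED _]; exact: le_trans ED (Dfun_le_Rfun A). Qed.

Lemma Sf_self_gt0 [A a] : fpt_in E A a -> 0 < Sf A A.
Proof. by rewrite Sf_self => -[a_gt0 [_ aE]]; have := E_le_Fa A; lra. Qed.

Lemma conflict_free_of_parts : conflict_free rho E.
Proof.
move=> A a B b Aa Bb A_attacks.
have SBB := Sf_self_gt0 Bb.
have [_ [_ aE]] := Aa; have [_ [_ bE]] := Bb.
have bR : b <= Rfun Fa rho (Sf B) E B := le_trans bE (E_le_Rfun_parts (Sf_self B)).
have [SBA | Aout] := pselect (supp (Sf B) A); last first.
  exact: (outparent_not_sufficient aE Aout SBB bR A_attacks).
have [[[cf_B _] _] _] := localCE B.
have RBA : 0 < Rfun Fa rho (Sf B) E A.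
  by have := E_le_Rfun_parts (Sf_supp B A SBA); case: Aa => ? _; lra.
have RBB : 0 < Rfun Fa rho (Sf B) E B by case: Bb => ? _; lra.
apply: (cf_B A a B b (fpt_in_fcap (Sf_supp B) SBA Aa) (fpt_in_fcap (Sf_supp B) SBB Bb)).
exact/sufficient_restr.
Qed.

Lemma defends_of_parts A a : fpt_in E A a -> wdefends Fa rho E A a.
Proof.
move=> Aa; have SAA := Sf_self_gt0 Aa; have [a_gt0 [a_le1 aE]] := Aa.
have [[[_ defA] _] _] := localCE A.
have [ED _] := E_le_Dfun_parts (Sf_self A).
apply: wdefends_of_local; last exact: defA (fpt_in_fcap (Sf_supp A) SAA Aa).
  by split=> //; split=> //; exact: le_trans aE (E_le_Rfun_parts (Sf_self A)).
exact: le_trans aE ED.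
Qed.

Lemma complete_of_parts A a : fpt_in Fa A a -> fpt_in C A a ->
  wdefends Fa rho E A a -> fpt_in E A a.
Proof.
move=> AFa [_ [_ aC]] defA; have [a_gt0 [a_le1 aFa]] := AFa.
have SAA : 0 < Sf A A by rewrite Sf_self; lra.
have cfE := conflict_free_of_parts.
have aR := defended_le_Rfun cfE AFa SAA defA.
have RAa : fpt_in (Rfun Fa rho (Sf A) E) A a by split=> //; split.
have aD := Dpt_le_Dfun (Dpt_of_defended RAa defA).
have [_ completeA] := localCE A.
have ADC : fpt_in (fcap (Dfun Fa rho (Sf A) E) C) A a.
  by split=> //; split=> //; rewrite /fcap le_min aD.
have [_ [_ aE]] := completeA A a RAa ADC (wdefends_restr (Sf_supp A) cfE a_gt0 aR defA).
by split=> //; split=> //; rewrite -(fcap_Fa (Sf_self A)).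
Qed.

Lemma CE_of_parts : CE Fa rho C E.
Proof.
split; [split; [split|] |].
- exact: conflict_free_of_parts.
- exact: defends_of_parts.
- by move=> A; case: (E_le_Dfun_parts (Sf_self A)).
- exact: complete_of_parts.
Qed.

End Parts.
End Decomposition.

Lemma SCC_supp {R : realType} {Args : finType} (Fa : Args -> R) rho X B :
  0 < SCC Fa rho X B -> SCC Fa rho X B = Fa B.
Proof. by rewrite /SCC; case: asboolP => // _; rewrite ltxx. Qed.

Lemma SCC_self {R : realType} {Args : finType} (Fa : Args -> R) rho X :
  SCC Fa rho X X = Fa X.
Proof. by rewrite /SCC asboolT //; left. Qed.

Theorem mainTheorem4 (R : realType) (Args : finType)
    (Fa : Args -> R) (rho : Args -> Args -> R) (E : Args -> R) :
  (forall x, 0 <= Fa x <= 1) ->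
  (forall x y, 0 <= rho x y <= 1) ->
  (forall x, 0 <= E x) -> fsubset E Fa ->
  forall C : Args -> R, (forall x, 0 <= C x) -> fsubset C Fa ->
  (CE Fa rho C E <->
   forall X : Args,
     CE (Rfun Fa rho (SCC Fa rho X) E)
        (restr (Rfun Fa rho (SCC Fa rho X) E) rho)
        (fcap (Dfun Fa rho (SCC Fa rho X) E) C)
        (fcap E (SCC Fa rho X))).
Proof.
move=> Fa01 rho01 E_ge0 E_le_Fa C _ _.
split=> [CE_E X | CE_parts].
  exact: CE_part Fa01 rho01 E_ge0 E_le_Fa _ (SCC_supp Fa rho X) C CE_E.
exact: CE_of_parts Fa01 rho01 E_ge0 E_le_Fa _ (SCC_supp Fa rho) (SCC_self Fa rho)
  C CE_parts.
Qed.
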